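(* Let $K\ge 2$ be a power of two. $K$-way LCP-mergesort, as described in the context, sorts any set $\mathcal S$ of $n$ strings and computes its LCP array $H$ using fewer than $L(H) + n\lceil\log_K n\rceil\log_2 K + n + \lceil\frac{n-1}{K-1}\rceil$ character comparisons, and runs in $O(D+n\log n)$ time.
   Context: Strings are zero-terminated finite sequences over a totally ordered alphabet, ordered lexicographically; $\mathrm{lcp}(s,t)$ is the length of their longest common prefix. For a sorted sequence $s_1\le\dots\le s_n$ its LCP array is $H=(\bot,h_2,\dots,h_n)$, $h_i=\mathrm{lcp}(s_{i-1},s_i)$, and $L(H)=\sum_{i\ge 2}h_i$. The distinguishing prefix size $D$ is the sum over all $s\in\mathcal S$ of the length of the shortest prefix of $s$ that is not a prefix of any other string of $\mathcal S$ ($D\ge L(H)$). $K$-way LCP-merge is the procedure merging $K$ sorted sequences with LCP arrays via an LCP-aware tournament tree: $K$ calls of LCP-Compare to build the tree and $\log_2 K$ calls per output string to replay the leaf-to-root path of the previous winner, where LCP-Compare on $(a,s_a,h_a),(b,s_b,h_b)$ with $h_a=\mathrm{lcp}(p,s_a)$, $h_b=\mathrm{lcp}(p,s_b)$, $p\le s_a,s_b$ decides by the LCPs when $h_a\ne h_b$ (the string with larger LCP is smaller; resulting lcp is $\min(h_a,h_b)$) and otherwise compares characters from position $h_a+1$ on until a mismatch or terminator; it returns the smaller index with its LCP, and the larger index with $\mathrm{lcp}(s_a,s_b)$. Counting convention: each character comparison yielding equality counts one; the final mismatch test counts one; the LCP-only cases count zero. $K$-way LCP-mergesort: a set of size at most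 1 is returned with trivial LCP array; otherwise the input is split into $K$ parts of nearly equal size (some possibly empty when $n<K$), each part is sorted recursively together with its LCP array, and the $K$ results are combined by one $K$-way LCP-merge (used at every level, including when $n<K$). *)

From HB Require Import structures.
From mathcomp Require Import all_boot all_order.
Set Implicit Arguments. Unset Strict Implicit. Unset Printing Implicit Defensive.
Import Order.TTheory.

Section LCPMergesort.
Context {d : Order.disp_t} {T : orderType d}.

(* Strings over the totally ordered alphabet T.  The zero terminator is
   implicit: it sits at position [size s] and is smaller than every character. *)
Definition str := seq T.

Definition str_le (x y : str) : bool := @Order.le _ (seqlexi T) x y.

Fixpoint lcp (s t : str) : nat :=
  match s, t with
  | x :: s', y :: t' => if x == y then (lcp s' t').+1 else 0
  | _, _ => 0
  end.

(* LCP array H = (bot, h_2, ..., h_n); bot is represented by 0. *)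
Definition lcp_array (ss : seq str) : seq nat :=
  if ss is x :: r then 0 :: pairmap lcp x r else [::].

Definition LH (ss : seq str) : nat := sumn (behead (lcp_array ss)).

(* Distinguishing prefix size D.  Prefixes are taken of the zero-terminated
   string (terminator modelled by None). *)
Definition term (s : str) : seq (option T) := rcons (map Some s) None.

Definition dist_prefix_len (S : seq str) (s : str) : nat :=
  find (fun m => ~~ has (fun t => (t != s) && prefix (take m (term s)) (term t)) S)
       (iota 0 (size s).+2).

Definition Dsize (S : seq str) : nat := sumn (map (dist_prefix_len S) S).

(* LCP-Compare on (a, x, hx), (b, y, hy).  Returns
   (true iff x is the smaller one, lcp(x,y) (LCP given to the larger one),
    number of character comparisons). *)
Definition lcp_compare (x : str) (hx : nat) (y : str) (hy : nat) : bool * nat * nat :=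
  if hy < hx then (true, hy, 0)
  else if hx < hy then (false, hx, 0)
  else let l := lcp x y in (str_le x y, l, l - hx + 1).

(* Annotated sequences: strings with their LCP relative to the predecessor
   (for the first element: relative to the common reference string).
   Results are (output, character comparisons, other elementary steps). *)
Definition res := (seq (str * nat) * nat * nat)%type.

(* One internal node of the tournament tree: the matches played at one node
   are exactly an LCP-aware two-way merge of the outputs of its two
   subtrees.  An exhausted input acts as an infinite sentinel (no
   character comparisons). *)
Fixpoint merge2 (fuel : nat) (l1 l2 : seq (str * nat)) : res :=
  match fuel with
  | 0 => (l1 ++ l2, 0, 0)
  | f.+1 =>
    match l1 with
    | [::] => (l2, 0, size l2)
    | (x, hx) :: r1 =>
      match l2 with
      | [::] => (l1, 0, size l1)
      | (y, hy) :: r2 =>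
        let: (xw, hl, c) := lcp_compare x hx y hy in
        if xw then
          let: (o, c', t') := merge2 f r1 ((y, hl) :: r2) in
          ((x, hx) :: o, c + c', t'.+1)
        else
          let: (o, c', t') := merge2 f ((x, hl) :: r1) r2 in
          ((y, hy) :: o, c + c', t'.+1)
      end
    end
  end.

(* K-way LCP-merge with K = 2^k: the tournament tree with K leaves
   (left subtree on the first K/2 inputs, right subtree on the last K/2). *)
Fixpoint kmerge (k : nat) (ls : seq (seq (str * nat))) : res :=
  match k with
  | 0 => (head [::] ls, 0, 1)
  | k'.+1 =>
    let: (a, ca, ta) := kmerge k' (take (2 ^ k') ls) in
    let: (b, cb, tb) := kmerge k' (drop (2 ^ k') ls) in
    let: (m, cm, tm) := merge2 (size a + size b) a b in
    (m, ca + cb + cm, ta + tb + tm + 1)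
  end.

Definition part_size (K n i : nat) : nat := n %/ K + (i < n %% K).
Definition part_start (K n i : nat) : nat := i * (n %/ K) + minn i (n %% K).
Definition parts (K : nat) (s : seq str) : seq (seq str) :=
  mkseq (fun i => take (part_size K (size s) i) (drop (part_start K (size s) i) s)) K.

(* K-way LCP-mergesort, K = 2^k; [fuel] bounds the recursion depth
   (size s suffices). *)
Fixpoint msort (k fuel : nat) (s : seq str) : res :=
  match fuel with
  | 0 => ([seq (x, 0) | x <- s], 0, 1)
  | f.+1 =>
    if size s <= 1 then ([seq (x, 0) | x <- s], 0, 1) else
    let rs := [seq msort k f p | p <- parts (2 ^ k) s] in
    let: (m, cm, tm) := kmerge k [seq r.1.1 | r <- rs] in
    (m, sumn [seq r.1.2 | r <- rs] + cm,
        sumn [seq r.2 | r <- rs] + tm + size s + 2 ^ k + 1)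
  end.

Definition lcp_mergesort (k : nat) (S : seq str) : res := msort k (size S) S.

End LCPMergesort.

(* Character comparisons are paid for by the growth of LCP annotations.
   Every string carries its LCP with its predecessor.  In an LCP-aware
   two-way merge, a match that raises the loser's annotation from h to h'
   (h' = lcp of the two contestants) costs at most h' - h + 1 character
   comparisons, so a merge costs at most the increase of the annotation sum
   plus the number of strings.  A tournament tree of depth log2 K therefore
   costs at most n log2 K plus the increase of the annotation sums, and over
   the ceil(log_K n) levels of the recursion these increases telescope to
   L(H).  Finally h_i < the distinguishing prefix length of s_i, so
   L(H) <= D, which together with the O(n log n) bookkeeping gives the time
   bound. *)

From HB Require Import structures.
From mathcomp Require Import all_boot all_order zify.
Set Implicit Arguments. Unset Strict Implicit. Unset Printing Implicit Defensive.
Import Order.TTheory.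

Lemma perm_flatten_map (I : eqType) (S : eqType) (F G : I -> seq S) (s : seq I) :
  {in s, forall i, perm_eq (F i) (G i)} ->
  perm_eq (flatten (map F s)) (flatten (map G s)).
Proof.
elim: s => //= i s IH FG; apply: perm_cat; first by apply: FG; rewrite mem_head.
by apply: IH => j sj; apply: FG; rewrite inE sj orbT.
Qed.

Lemma leq_sumn_map (I : eqType) (s : seq I) (F G H : I -> nat) a :
  {in s, forall i, F i <= G i + a * H i} ->
  sumn (map F s) <= sumn (map G s) + a * sumn (map H s).
Proof.
rewrite !sumnE !big_map big_distrr -big_split => FGH.
by rewrite big_seq [X in _ <= X]big_seq; apply: leq_sum => i /FGH.
Qed.

Lemma up_log_expn_leq p j n : 1 < p -> 0 < j -> up_log (p ^ j) n <= up_log p n.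
Proof.
move=> p_gt1 j_gt0; apply: up_log_min; first by rewrite -[1](expn0 p) ltn_exp2l.
apply: leq_trans (up_logP _ p_gt1) _.
by rewrite -expnM leq_pexp2l ?leq_pmull // ltnW.
Qed.

Section LCPMergesortAnalysis.
Context {d : Order.disp_t} {T : orderType d}.
Implicit Types (x y z p : str (T := T)) (s S out : seq (str (T := T))).

Lemma str_le_cons (a b : T) x y :
  str_le (a :: x) (b :: y) = (a <= b)%O && ((b <= a)%O ==> str_le x y).
Proof. by []. Qed.

Lemma str_le_total x y : str_le x y || str_le y x.
Proof. exact: (@le_total _ (seqlexi T)). Qed.

Lemma lcpC x y : lcp x y = lcp y x.
Proof. by elim: x y => [|a x IH] [|b y] //=; rewrite eq_sym IH. Qed.

Lemma lcp_size x y : lcp x y <= size x.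
Proof. by elim: x y => [|a x IH] [|b y] //=; case: eqP => // _; exact: IH. Qed.

Lemma lcp_min x y z : minn (lcp x y) (lcp y z) <= lcp x z.
Proof.
elim: x y z => [|a x IH] [|b y] [|c z] //=; rewrite ?minn0 ?min0n //.
have [<-|ab] := eqVneq a b; last by rewrite min0n.
by case: eqP => // _; rewrite minnSS ltnS.
Qed.

Lemma str_le_lcp_lt p x y :
  str_le p x -> str_le p y -> lcp p y < lcp p x -> str_le x y.
Proof.
elim: p x y => [|a p IH] [|b x] [|c y] //=; rewrite !str_le_cons.
have [<-|//] := eqVneq a b; rewrite lexx /= => px.
have [<- /=|ac /andP[le_ac _] _] := eqVneq a c.
  by rewrite lexx ltnS; exact: IH.
have lt_ac : (a < c)%O by rewrite lt_neqAle ac.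
by rewrite le_ac /= leNgt lt_ac.
Qed.

Lemma lcp_lt_eq p x y : lcp p y < lcp p x -> lcp x y = lcp p y.
Proof. by have := lcp_min x p y; have := lcp_min p x y; rewrite (lcpC x p); lia. Qed.

Lemma take_lcp x y : take (lcp x y) (term x) = take (lcp x y) (term y).
Proof. by elim: x y => [|a x IH] [|b y] //=; case: eqP => //= <-; rewrite IH. Qed.

Lemma lcp_compareP p x y : str_le p x -> str_le p y ->
  let: (b, h, c) := lcp_compare x (lcp p x) y (lcp p y) in
  h = lcp x y /\
  if b then str_le x y /\ c + lcp p y <= h + 1
  else str_le y x /\ c + lcp p x <= h + 1.
Proof.
move=> px py; rewrite /lcp_compare.
case: ltngtP => [yx|xy|eq_xy].
- by rewrite (lcp_lt_eq yx) (str_le_lcp_lt px py yx); do !split; lia.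
- by rewrite [lcp x y]lcpC (lcp_lt_eq xy) (str_le_lcp_lt py px xy); do !split; lia.
have := lcp_min x p y; rewrite (lcpC x p) => le_lcp.
case: ifP => [xy|/negbT yx]; do !split => //; try lia.
by have := str_le_total x y; rewrite (negbTE yx).
Qed.

Local Notation annotated := (seq (str (T := T) * nat)).

Fixpoint lcp_sorted p (l : annotated) : bool :=
  if l is (x, h) :: r then [&& str_le p x, h == lcp p x & lcp_sorted x r]
  else true.

Definition lcp_sum (l : annotated) : nat := sumn (map snd l).

Lemma lcp_sorted_path p o : lcp_sorted p o -> path str_le p (map fst o).
Proof. by elim: o p => [|[x h] o IH] p //= /and3P[-> _ /IH]. Qed.

Lemma lcp_sorted_pairmap p o :
  lcp_sorted p o -> map snd o = pairmap lcp p (map fst o).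
Proof. by elim: o p => [|[x h] o IH] p //= /and3P[_ /eqP-> /IH->]. Qed.

Lemma lcp_sortedP o : lcp_sorted [::] o ->
  [/\ sorted str_le (map fst o), map snd o = lcp_array (map fst o)
    & lcp_sum o = LH (map fst o)].
Proof.
case: o => [|[x h] o] //= /andP[/eqP-> V].
by rewrite /lcp_sum /LH /= (lcp_sorted_pairmap V) (lcp_sorted_path V).
Qed.

Lemma merge2P f p l1 l2 o c t :
  lcp_sorted p l1 -> lcp_sorted p l2 -> size l1 + size l2 <= f ->
  merge2 f l1 l2 = (o, c, t) ->
  [/\ lcp_sorted p o, perm_eq (map fst o) (map fst (l1 ++ l2)),
      size o = size l1 + size l2,
      c + lcp_sum l1 + lcp_sum l2 <= lcp_sum o + size l1 + size l2
    & t <= size l1 + size l2].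
Proof.
elim: f p l1 l2 o c t => [|f IH] p l1 l2 o c t.
  by case: l1 l2 => [|??] [|??] //= _ _ _ [<- <- <-].
case: l1 => [|[x hx] r1] /=.
  by move=> _ ? _ [<- <- <-]; rewrite /lcp_sum perm_refl /=; split=> //; lia.
case: l2 => [|[y hy] r2] /=.
  by move=> ? _ _ [<- <- <-]; rewrite cats0 /lcp_sum perm_refl /=; split=> //; lia.
move=> /and3P[px /eqP-> V1] /and3P[py /eqP-> V2] Hf.
have := lcp_compareP px py; rewrite /lcp_sum /=.
case: lcp_compare => [[[] h] c0] [-> [le_xy cost]].
- case E: merge2 => [[o' c'] t'] [<- <- <-].
  have V2' : lcp_sorted x ((y, lcp x y) :: r2) by rewrite /= le_xy eqxx.
  have [|Vo Po So Co To] := IH _ _ _ _ _ _ V1 V2' _ E; first by rewrite /=; lia.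
  move: Po Co To; rewrite /= px eqxx Vo perm_cons So !map_cat /lcp_sum /= => ->.
  by split=> //; lia.
- case E: merge2 => [[o' c'] t'] [<- <- <-].
  have V1' : lcp_sorted y ((x, lcp x y) :: r1) by rewrite /= le_xy lcpC eqxx.
  have [|Vo Po So Co To] := IH _ _ _ _ _ _ V1' V2 _ E; first by rewrite /=; lia.
  move: Po Co To; rewrite /= py eqxx Vo So !map_cat /lcp_sum /= => Po.
  rewrite perm_sym (perm_catCA (x :: _) [:: y]) /= perm_cons perm_sym Po.
  by split=> //; lia.
Qed.

Lemma kmergeP k ls o c t :
  all (lcp_sorted [::]) ls -> size ls <= 2 ^ k -> kmerge k ls = (o, c, t) ->
  [/\ lcp_sorted [::] o, perm_eq (map fst o) (flatten (map (map fst) ls)),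
      size o = sumn (map size ls),
      c + sumn (map lcp_sum ls) <= lcp_sum o + k * sumn (map size ls)
    & t < k * sumn (map size ls) + 2 ^ k.+1].
Proof.
elim: k ls o c t => [|k IH] ls o c t.
  case: ls => [|l [|??]] //= V _ [<- <- <-]; first by split.
  by move: V => /andP[V _]; rewrite cats0 perm_refl; split=> //; lia.
move=> V Hs /=; set A := take (2 ^ k) ls; set B := drop (2 ^ k) ls.
have def_ls : ls = A ++ B by rewrite cat_take_drop.
move: V; rewrite def_ls all_cat => /andP[VA VB].
have sA : size A <= 2 ^ k by rewrite size_take_min geq_minl.
have sB : size B <= 2 ^ k by rewrite size_drop; move: Hs; rewrite expnS; lia.
case E1: (kmerge k A) => [[a ca] ta].
case E2: (kmerge k B) => [[b cb] tb].
case E3: merge2 => [[m cm] tm] [<- <- <-].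
have [Va Pa Sa Ca Ta] := IH _ _ _ _ VA sA E1.
have [Vb Pb Sb Cb Tb] := IH _ _ _ _ VB sB E2.
have [Vm Pm Sm Cm Tm] := merge2P Va Vb (leqnn _) E3.
rewrite !map_cat !sumn_cat flatten_cat; split=> //.
- by apply: perm_trans Pm _; rewrite map_cat; exact: perm_cat.
- by rewrite Sm Sa Sb.
- by move: Ca Cb Cm; rewrite Sa Sb mulnDr; lia.
- by move: Ta Tb Tm; rewrite Sa Sb !expnS mulnDr; lia.
Qed.

Lemma flatten_parts K s : 0 < K -> flatten (parts K s) = s.
Proof.
move=> K_gt0; set n := size s.
have start_take j : flatten (mkseq (fun i =>
    take (part_size K n i) (drop (part_start K n i) s)) j) = take (part_start K n j) s.
  elim: j => [|j IHj]; first by rewrite /part_start mul0n min0n take0.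
  have -> : part_start K n j.+1 = part_start K n j + part_size K n j.
    by rewrite /part_start /part_size mulSn; lia.
  by rewrite mkseqS flatten_rcons IHj takeD.
rewrite /parts start_take -[RHS]take_size; congr take.
have := ltn_pmod n K_gt0; have := divn_eq n K; rewrite /part_start; lia.
Qed.

Lemma size_parts_leq K s M (q : seq str) :
  0 < K -> size s <= K * M -> q \in parts K s -> size q <= M.
Proof.
move=> K_gt0 sM /mapP[i _ ->]; rewrite size_take_min; apply: leq_trans (geq_minl _ _) _.
have := ltn_pmod (size s) K_gt0; have := divn_eq (size s) K.
rewrite /part_size; case: ltnP => _ /=; nia.
Qed.

Lemma leaf_lcp_sorted s : size s <= 1 -> lcp_sorted [::] [seq (x, 0) | x <- s].
Proof. by case: s => [|x [|??]]. Qed.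

Definition msort_spec k e s (r : res) : Prop :=
  [/\ lcp_sorted [::] r.1.1, perm_eq (map fst r.1.1) s,
      r.1.2 <= lcp_sum r.1.1 + k * e * size s
    & r.2 <= 1 + (4 * 2 ^ k + k + 1) * e * size s].

Lemma msort_spec_leq k e e' s r : e <= e' -> msort_spec k e s r -> msort_spec k e' s r.
Proof.
move=> le_e [V P C Tr]; split=> //; [apply: leq_trans C _|apply: leq_trans Tr _];
  by rewrite leq_add2l leq_mul2r leq_mul2l le_e !orbT.
Qed.

Lemma msort_spec_merge k e g ps s :
  0 < size s -> flatten ps = s -> size ps = 2 ^ k ->
  {in ps, forall q, msort_spec k e q (g q)} ->
  msort_spec k e.+1 s
    (let rs := map g ps in
     let: (m, cm, tm) := kmerge k [seq r.1.1 | r <- rs] in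
     (m, sumn [seq r.1.2 | r <- rs] + cm,
         sumn [seq r.2 | r <- rs] + tm + size s + 2 ^ k + 1)).
Proof.
move=> s_gt0 flat_ps size_ps part_ok /=.
set ls := [seq r.1.1 | r <- _]; case E: kmerge => [[m cm] tm].
have size_ls : map size ls = map size ps.
  rewrite -!map_comp; apply/eq_in_map => q /part_ok[_ /perm_size].
  by rewrite /= size_map.
have size_s : sumn (map size ps) = size s by rewrite -size_flatten flat_ps.
have [||Vm Pm _ Cm Tm] := kmergeP _ _ E.
- by apply/allP => _ /mapP[_ /mapP[q ps_q ->] ->]; case: (part_ok q ps_q).
- by rewrite !size_map size_ps.
have Cps : sumn [seq r.1.2 | r <- map g ps] <=
    sumn (map lcp_sum ls) + k * e * sumn (map size ps).
  by rewrite -!map_comp; apply: leq_sumn_map => q /part_ok[_ _ C _].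
have Tps : sumn [seq r.2 | r <- map g ps] <=
    sumn (map (fun=> 1) ps) + (4 * 2 ^ k + k + 1) * e * sumn (map size ps).
  by rewrite -map_comp; apply: leq_sumn_map => q /part_ok[_ _ _ C].
have ones : sumn (map (fun=> 1) ps) = 2 ^ k by rewrite sumnE big_map sum1_size.
have le_K : 2 ^ k <= 2 ^ k * size s by rewrite leq_pmulr.
split=> //=.
- rewrite /ls -!map_comp in Pm; apply: perm_trans Pm _.
  have := @perm_flatten_map _ _ _ id ps; rewrite map_id flat_ps.
  by apply=> q /part_ok[_ P _ _].
- by move: Cps Cm; rewrite size_ls size_s !mulnS !mulnDl; lia.
- by move: Tps Tm; rewrite size_ls size_s ones expnS !mulnS !mulnDl; nia.
Qed.

Lemma msortP k f s : 0 < k -> size s <= f ->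
  msort_spec k (up_log (2 ^ k) (size s)) s (msort k f s).
Proof.
move=> k_gt0; set K := 2 ^ k.
have K_gt1 : 1 < K by rewrite -[1]/(2 ^ 0) ltn_exp2l.
have K_gt0 : 0 < K by exact: ltnW.
elim: f s => [|f IH] s /=.
  by rewrite leqn0 => /eqP/size0nil ->; split.
move=> le_sf; case: leqP => [le_s1|lt_1s].
  by split=> /=; [exact: leaf_lcp_sorted|rewrite -map_comp map_id|lia|lia].
set e := up_log K (size s).
have e_gt0 : 0 < e by rewrite up_log_gt0 K_gt1.
rewrite -(prednK e_gt0); apply: msort_spec_merge => [|||q ps_q].
- by lia.
- exact: flatten_parts.
- by rewrite size_mkseq.
apply: (msort_spec_leq _ (IH _ _)).
  apply: up_log_min => //; apply: size_parts_leq ps_q => //.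
  by rewrite -expnS prednK ?up_logP.
have le_s1f : (size s).-1 <= f by lia.
by apply: leq_trans le_s1f; apply: size_parts_leq ps_q; nia.
Qed.

Lemma lcp_lt_dist_prefix_len S x y :
  y \in S -> y != x -> lcp y x < dist_prefix_len S x.
Proof.
move=> yS yx; rewrite /dist_prefix_len ltnNge; apply/negP => le_find.
have lcp_lt : lcp y x < (size x).+2 by rewrite lcpC ltnS leqW ?lcp_size.
set P := (fun m => _) in le_find.
have /(nth_find 0) : has P (iota 0 (size x).+2).
  by rewrite has_find size_iota; exact: leq_ltn_trans lcp_lt.
rewrite nth_iota ?add0n; last by rewrite (leq_ltn_trans le_find).
move/negP; apply; apply/hasP; exists y; rewrite // yx /=.
rewrite -(take_takel _ le_find) -take_lcp.
exact: prefix_trans (prefix_take _ _) (prefix_take _ _).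
Qed.

Lemma sumn_pairmap_lcp_le S x r :
  uniq (x :: r) -> all (mem S) (x :: r) ->
  sumn (pairmap lcp x r) <= sumn (map (dist_prefix_len S) r).
Proof.
elim: r x => [|y r IH] x //= /andP[xr uyr] /and3P[xS yS rS].
apply: leq_add (IH _ uyr _); last by rewrite /= yS.
apply/ltnW/lcp_lt_dist_prefix_len => //.
by apply: contraNneq xr => ->; rewrite mem_head.
Qed.

Lemma LH_le_Dsize S out : uniq S -> perm_eq out S -> LH out <= Dsize S.
Proof.
move=> uS out_S; rewrite /Dsize -(perm_sumn (perm_map _ out_S)) /LH.
case: out out_S => [|x r] //= out_S; apply: leq_trans (leq_addl _ _).
apply: sumn_pairmap_lcp_le; first by rewrite (perm_uniq out_S).
by apply/allP => y ry; rewrite /= -(perm_mem out_S).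
Qed.

End LCPMergesortAnalysis.

Theorem mainTheorem5 (d : Order.disp_t) (T : orderType d) (k : nat) :
  0 < k ->
  exists C : nat, forall S : seq (seq T), uniq S -> 0 < size S ->
    let n := size S in
    let K := 2 ^ k in
    let r := lcp_mergesort k S in
    let out := [seq p.1 | p <- r.1.1] in
    let comps := r.1.2 in
    let steps := r.2 in
    [/\ perm_eq out S,
        sorted str_le out,
        [seq p.2 | p <- r.1.1] = lcp_array out,
        comps < LH out + n * up_log K n * k + n + (n.-1 + (K - 2)) %/ K.-1
      & comps + steps <= C * (Dsize S + n * up_log 2 n + n)].
Proof.
move=> k_gt0; set A := 4 * 2 ^ k + k + 1; exists (k + A + 1) => S uS n_gt0.
have := msortP k_gt0 (leqnn (size S)); rewrite /lcp_mergesort.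
case: msort => [[o c] t] [V P C Tb]; rewrite /= -/A in V P C Tb *.
have [So Lo Ho] := lcp_sortedP V.
have LD := LH_le_Dsize uS P.
have le_log := @up_log_expn_leq 2 k (size S) isT k_gt0.
rewrite Ho in C; set L := LH _ in C LD *.
set n := size S in C Tb le_log n_gt0 *; set u := up_log (2 ^ k) n in C Tb le_log *.
split=> //.
- apply: leq_trans (leq_addr _ _); move: C.
  by rewrite mulnAC [_ * k]mulnC mulnA; lia.
have le_u a : a * u * n <= a * (n * up_log 2 n).
  by rewrite mulnAC -mulnA leq_mul2l leq_mul2l le_log !orbT.
have := le_u k; have := le_u A.
by clearbody A; rewrite !mulnDl !mulnDr; lia.
Qed.
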